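(* Let $\mathcal A$ be an $n$-DPDA whose input alphabet contains $\star$. If $R$ is an infinite run of $\mathcal A$ reading only stars, then $R(i)$ is a milestone configuration for infinitely many indices $i$.
   Context: Stacks: fix order $n\ge1$, finite stack alphabet $\Gamma$. A $0$-stack is $(\gamma,x)$ with $\gamma\in\Gamma$, $x=(x_n,\dots,x_1)$ a vector of $n$ positive integers (position). For $k\in\{1,\dots,n\}$ a $k$-stack is a finite list $[s_1,\dots,s_m]$ ($m\ge0$) of nonempty $(k-1)$-stacks such that for some $x_n,\dots,x_{k+1}$, every position in $s_i$ has the form $(x_n,\dots,x_{k+1},i,y_{k-1},\dots,y_1)$. The top is at the right; $s^k:s^{k-1}$ appends at the top (right-associative); for $s^r=t^r:t^{r-1}:\dots:t^k$, $\mathrm{top}^k(s^r)=t^k$. Equality of stacks includes positions. For $k<n$, $\mathsf p_{+1}(s^k)$ adds $1$ to the $(n-k)$-th coordinate of all positions. Operations of order $k\ge1$: $\mathsf{pop}^k(s^r:\dots:s^k:s^{k-1})=s^r:\dots:s^k$, defined only if the topmost $k$-stack has at least two $(k-1)$-stacks; $\mathsf{push}^k_\gamma(s^r:\dots:s^0)=s^r:\dots:s^{k+1}:(s^k:\dots:s^0):\mathsf p_{+1}(s^{k-1}:\dots:s^1:(\gamma,x))$ where $s^0=(\gamma',x)$. An $n$-DPDA has transitions determined by state and topmost stack symbol, each either $\mathrm{read}(\vec q)$ ($\vec q:A\to Q$ injective; leads to $(\vec q(a),s)$ for $a\in A$, this step reads $a$) or $(q,op)$ with $op$ a stack operation of order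 $\le n$ (leads to $(q,op(s))$ if defined; reads nothing). Configurations are (state, nonempty $n$-stack). A run is a finite or infinite sequence $R=c_0,c_1,\dots$ with each $c_i$ a successor of $c_{i-1}$; $R(i)=c_i$, $R[i,j]=c_i,\dots,c_j$. The word read is the concatenation of letters read by the steps. History: for a finite run $R$ and a $0$-stack $s^0$ of $R(|R|)$, $\mathrm{hist}(R,s^0)$ is a $0$-stack of $R(0)$: if $|R|=0$ it is $s^0$; if $R=S\circ T$, $|T|=1$, and the last step is a read or a $\mathsf{pop}$, or a $\mathsf{push}^r_\gamma$ with $s^0$ not in the topmost $(r-1)$-stack of $R(|R|)$, it is $\mathrm{hist}(S,s^0)$; if the last step is $\mathsf{push}^r_\gamma$ and $s^0$ is in the topmost $(r-1)$-stack of $R(|R|)$, it is $\mathrm{hist}(S,t^0)$ with $t^0$ equal to $s^0$ with the $(n-r+1)$-th position coordinate decreased by $1$. For a $k$-stack $s^k$, $k\ge1$, $\mathrm{hist}(R,s^k)$ is the $k$-stack of $R(0)$ containing $\mathrm{hist}(R,s^0)$ for all $0$-stacks $s^0$ of $s^k$. A run $R$ is $0$-upper if $\mathrm{hist}(R,\mathrm{top}^0(R(|R|)))=\mathrm{top}^0(R(0))$. Milestone: a configuration $c$ is a milestone if there exist an infinite run $R$ from $c$ reading only stars and an infinite set $I\subseteq\mathbb N$ with $0\in I$ such that $R[i,j]$ is $0$-upper for all $i,j\in I$ with $i\le j$. *)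

From mathcomp Require Import all_boot.
Set Implicit Arguments.
Unset Strict Implicit.
Unset Printing Implicit Defensive.

(* The TOP of a stack is the
   HEAD of the list (the paper writes the top on the right).  Positions are
   not stored: inside an n-stack the position of every 0-stack is determined
   by the structure (coordinate x_k = index, counted from the bottom starting
   at 1, of the enclosing (k-1)-stack inside its k-stack). *)
Fixpoint stk (G : Type) (k : nat) : Type :=
  if k is k'.+1 then seq (stk G k') else G.

Section Stacks.
Variable G : Type.

Fixpoint ne_stk (k : nat) : stk G k -> bool :=
  match k return stk G k -> bool with
  | 0 => fun _ => true
  | k'.+1 => fun s => (size s != 0) && all (@ne_stk k') s
  end.

Fixpoint top0 (k : nat) : stk G k -> option G :=
  match k return stk G k -> option G with
  | 0 => fun g => Some g
  | k'.+1 => fun s => if s is t :: _ then @top0 k' t else None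
  end.

Fixpoint settop (g : G) (k : nat) : stk G k -> stk G k :=
  match k return stk G k -> stk G k with
  | 0 => fun _ => g
  | k'.+1 => fun s => if s is t :: u then @settop g k' t :: u else s
  end.

Fixpoint popk (r k : nat) : stk G k -> option (stk G k) :=
  match k return stk G k -> option (stk G k) with
  | 0 => fun _ => None
  | k'.+1 => fun s =>
      if r == k'.+1 then
        (if s is _ :: (_ :: _) as u then Some u else None)
      else (if s is t :: u then omap (fun t' => t' :: u) (@popk r k' t)
            else None)
  end.

Fixpoint pushk (r : nat) (g : G) (k : nat) : stk G k -> option (stk G k) :=
  match k return stk G k -> option (stk G k) with
  | 0 => fun _ => None
  | k'.+1 => fun s =>
      if s is t :: u then
        (if r == k'.+1 then Some (@settop g k' t :: t :: u)
         else omap (fun t' => t' :: u) (@pushk r g k' t))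
      else None
  end.

(* position (x_k, ..., x_1) of the topmost 0-stack; indices counted from the
   bottom starting at 1, so the topmost index is the size of the list *)
Fixpoint toppos (k : nat) : stk G k -> seq nat :=
  match k return stk G k -> seq nat with
  | 0 => fun _ => [::]
  | k'.+1 => fun s => if s is t :: _ then size s :: @toppos k' t
                      else 0 :: nseq k' 0
  end.

End Stacks.

Section DPDA.
Variables (n : nat) (Q G A : finType) (star : A).

(* stack operations of order r = i.+1 in {1,...,n} *)
Inductive stack_op : Type :=
  | Pop of 'I_n
  | Push of 'I_n & G.

Definition apply_op (o : stack_op) (s : stk G n) : option (stk G n) :=
  match o with
  | Pop i => popk i.+1 s
  | Push i g => pushk i.+1 g s
  end.

Inductive transition : Type :=
  | Read of (A -> Q)
  | DoOp of Q & stack_op.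

Variable delta : Q -> G -> transition.

Definition config : Type := (Q * stk G n)%type.

Definition valid_config (c : config) : bool := ne_stk c.2.

Definition step (c c' : config) (l : option A) : Prop :=
  match top0 c.2 with
  | None => False
  | Some g =>
      match delta c.1 g with
      | Read f => exists a, l = Some a /\ c' = (f a, c.2)
      | DoOp q o => l = None /\ c'.1 = q /\ apply_op o c.2 = Some c'.2
      end
  end.

Definition reads_star (l : option A) : bool :=
  if l is Some a then a == star else true.

Definition star_run (R : nat -> config) : Prop :=
  forall i, valid_config (R i) /\
            exists l, step (R i) (R i.+1) l /\ reads_star l.

(* history through one step c -> c': maps the position p of a 0-stack of c'
   to the position of a 0-stack of c *)
Definition hist_step (c c' : config) (p : seq nat) : seq nat :=
  match top0 c.2 with
  | None => p
  | Some g =>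
      match delta c.1 g with
      | DoOp _ (Push i _) =>
          (* r = i.+1; the topmost (r-1)-stack is determined by the
             coordinates x_n, ..., x_r, i.e. the first n - i entries *)
          if take (n - i) p == take (n - i) (toppos c'.2)
          then set_nth 0 p (n - i.+1) (nth 0 p (n - i.+1)).-1
          else p
      | _ => p
      end
  end.

Fixpoint hist (R : nat -> config) (i d : nat) (p : seq nat) : seq nat :=
  if d is d'.+1 then hist R i d' (hist_step (R (i + d')) (R (i + d'.+1)) p)
  else p.

Definition upper0 (R : nat -> config) (i j : nat) : Prop :=
  hist R i (j - i) (toppos (R j).2) = toppos (R i).2.

Definition infinite_set (I : nat -> Prop) : Prop :=
  forall m, exists i, m <= i /\ I i.

Definition milestone (c : config) : Prop :=
  exists R : nat -> config, R 0 = c /\ star_run R /\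
    exists I : nat -> Prop, infinite_set I /\ I 0 /\
      forall i j, I i -> I j -> i <= j -> upper0 R i j.

End DPDA.

From mathcomp Require Import all_boot.
From mathcomp Require Import zify.
From Stdlib Require Import Classical Wf_nat.
Set Implicit Arguments.
Unset Strict Implicit.
Unset Printing Implicit Defensive.

(* Call R[i,j] "m-upper" when the history in R(i) of the topmost 0-stack of
   R(j) agrees with the topmost 0-stack of R(i) on its first m position
   coordinates (x_n, ..., x_(n-m+1)); 0-upper in the sense of the paper is
   n-upper here.  m-upper runs compose and satisfy a non-crossing property.
   We show by induction on m <= n that there is an infinite set of indices
   which is pairwise m-upper.  For the step from m to m+1 we close the set
   downwards under m-upper runs and keep the "record lows" of the (m+1)-th
   coordinate of the top position: the history of the top of R(j) in R(t)
   has its (m+1)-th coordinate equal to that of the top of some R(w) with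
   R[w,j] m-upper (it only changes at pushes, which are undone exactly at
   their source), and it is at most the top coordinate of R(t) because it is
   a position of a 0-stack of R(t).  For m = n the infinite set, restricted
   to indices beyond i and shifted, witnesses that R(i) is a milestone. *)

Lemma take_set_nth_lt (T : Type) (x0 : T) (s : seq T) m j y :
  j < m -> take m (set_nth x0 s j y) = set_nth x0 (take m s) j y.
Proof.
elim: s m j => [|a s IH] [|m] [|j] //= jm; last by rewrite IH.
by rewrite take_oversize // size_ncons /= addn1.
Qed.

Lemma take_set_nth_ge (T : Type) (x0 : T) (s : seq T) m j y :
  m <= j -> m <= size s -> take m (set_nth x0 s j y) = take m s.
Proof. by elim: s m j => [|a s IH] [|m] [|j] //= jm ms; rewrite IH. Qed.

Lemma set_nth_nth (T : Type) (x0 : T) (s : seq T) j :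
  j < size s -> set_nth x0 s j (nth x0 s j) = s.
Proof.
move=> js; apply: (@eq_from_nth _ x0) => [|i _].
  by rewrite size_set_nth; apply/maxn_idPr.
by rewrite nth_set_nth /=; case: eqP => [->|].
Qed.

Lemma eq_take_cases (T : Type) (p q : seq T) m :
  take m p = take m q -> p = q \/ (m <= size p /\ m <= size q).
Proof.
move=> E; case: (leqP m (size p)) => hp; case: (leqP m (size q)) => hq.
- by right.
- have := congr1 size E; rewrite (size_takel hp) (take_oversize (ltnW hq)).
  by move=> H; rewrite -H ltnn in hq.
- have := congr1 size E; rewrite (size_takel hq) (take_oversize (ltnW hp)).
  by move=> H; rewrite H ltnn in hp.
- by left; move: E; rewrite !take_oversize // ltnW.
Qed.

(* The history of a position p through push^r in a k-stack, j = k - r: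
   coordinate j is decreased when p lies in the freshly pushed copy, i.e.
   when p agrees with the new top position T on its first j + 1
   coordinates. *)
Definition dec_at (j : nat) (T p : seq nat) : seq nat :=
  if take j.+1 p == take j.+1 T then set_nth 0 p j (nth 0 p j).-1 else p.

Lemma take_dec_at j T p q m :
  take m p = take m q -> take m (dec_at j T p) = take m (dec_at j T q).
Proof.
rewrite /dec_at => E; case: (eq_take_cases E) => [-> //|[sp sq]].
case: (ltnP j m) => jm; last by do 2!case: ifP => _; rewrite ?take_set_nth_ge.
have E1 : take j.+1 p = take j.+1 q.
  by rewrite -(take_takel p jm) -(take_takel q jm) E.
rewrite E1; case: ifP => _ //.
by rewrite !take_set_nth_lt // E -(nth_take 0 jm p) E nth_take.
Qed.

Section Positions.
Variable G : Type.

(* [is_pos s p]: p is the position (x_k, ..., x_1) of a 0-stack of the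
   k-stack s, with indices counted from the bottom starting at 1, as in
   [toppos]. *)
Fixpoint is_pos (k : nat) : stk G k -> seq nat -> bool :=
  match k return stk G k -> seq nat -> bool with
  | 0 => fun _ p => nilp p
  | k'.+1 => fun s p =>
      if p is x :: p' then
        (0 < x <= size s) &&
        (if drop (size s - x) s is t :: _ then @is_pos k' t p' else false)
      else false
  end.

Lemma size_toppos k (s : stk G k) : size (toppos s) = k.
Proof.
elim: k s => [//|k IH] [|t u] /=; first by rewrite size_nseq.
by rewrite IH.
Qed.

Lemma size_is_pos k (s : stk G k) p : is_pos s p -> size p = k.
Proof.
elim: k s p => [s [|//] //|k IH s [//|x p]] /=.
by case/andP=> _; case: (drop _ s) => [//|t _] /IH ->.
Qed.

Lemma is_pos_top k (s : stk G k) : ne_stk s -> is_pos s (toppos s).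
Proof.
elim: k s => [//|k IH] [//|t u] /= /andP [nt _].
by rewrite ltnS leqnn subnn /= IH.
Qed.

(* A position sharing its first m coordinates with the top position lies
   in the topmost (k-m)-stack, so its next coordinate is at most the top's. *)
Lemma is_pos_le_top k (s : stk G k) p m :
  is_pos s p -> take m p = take m (toppos s) ->
  nth 0 p m <= nth 0 (toppos s) m.
Proof.
elim: k s p m => [s [|//] m|k IH s [//|x p] m] /=; first by rewrite nth_nil.
case/andP=> /andP [x0 xs]; case: s xs => [|t u] xs.
  by rewrite leqn0 in xs; rewrite (eqP xs) in x0.
case: m => [//|m] /= Hd [Ex Ht].
by move: Hd; rewrite Ex subnn /= => /IH; apply.
Qed.

Lemma is_pos_settop (g : G) k (t : stk G k) p :
  is_pos (settop g t) p = is_pos t p.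
Proof.
elim: k t p => [//|k IH] [|t u] [|x p] //=.
by case: ((size u).+1 - x) => [|d] /=; rewrite ?IH.
Qed.

Lemma toppos_settop (g : G) k (t : stk G k) : toppos (settop g t) = toppos t.
Proof. by elim: k t => [//|k IH] [|t u] //=; rewrite IH. Qed.

Lemma is_pos_pop r k (s s' : stk G k) p :
  popk r s = Some s' -> is_pos s' p -> is_pos s p.
Proof.
elim: k s s' p => [//|k IH] s s' p /=.
case: eqP => _.
  case: s => [|a [|b c]] // [<-]; case: p => [//|x p] /=.
  case/andP=> /andP [x0 xs] H.
  by rewrite x0 /= (leq_trans xs) //= subSn.
case: s => [//|t u]; case E: popk => [t'|] //= [<-].
case: p => [//|x p] /= /andP [xs]; rewrite xs /=.
by case: ((size u).+1 - x) => [|d] //=; apply: IH E.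
Qed.

Lemma pushk_order r (g : G) k (s s' : stk G k) :
  pushk r g s = Some s' -> 0 < r <= k.
Proof.
elim: k s s' => [//|k IH] [//|t u] s' /=.
case: eqP => [-> _|_]; first by rewrite ltnS leqnn.
have := IH t; case: (pushk r g t) => [t'|] //= H _.
by case/andP: (H _ erefl) => -> /= /leqW.
Qed.

Lemma toppos_push r (g : G) k (s s' : stk G k) :
  pushk r g s = Some s' ->
  toppos s' = set_nth 0 (toppos s) (k - r) (nth 0 (toppos s) (k - r)).+1.
Proof.
elim: k s s' => [//|k IH] [//|t u] s' /=.
case: eqP => [-> [<-]|_]; first by rewrite subnn /= toppos_settop.
case E: (pushk r g t) => [t'|] //= [<-] /=.
have /andP [r0 rk] := pushk_order E.
by rewrite subSn //= (IH _ _ E).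
Qed.

Lemma is_pos_push r (g : G) k (s s' : stk G k) p :
  pushk r g s = Some s' -> is_pos s' p ->
  is_pos s (dec_at (k - r) (toppos s') p).
Proof.
elim: k s s' p => [//|k IH] [//|t u] s' p /=.
case: eqP => [-> [<-]|ne].
  rewrite /dec_at subnn /=; case: p => [//|x p] /= /andP [/andP [x0 xs] H].
  rewrite !take0; case: eqP => [[Ex]|Nx] /=.
    by move: H; rewrite Ex subnn /= is_pos_settop => H; rewrite ltnSn subnn.
  have xs' : x <= (size u).+1.
    by rewrite -ltnS ltn_neqAle xs andbT; apply/eqP => E; apply: Nx; rewrite E.
  by rewrite x0 xs' /=; move: H; rewrite subSn.
have Hle := @pushk_order r g k t.
have := IH t; case: (pushk r g t) Hle => [t'|] //= Hle IH' [<-] /=.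
have /andP [r0 rk] := Hle _ erefl.
case: p => [//|x p] /= /andP [xs H].
rewrite /dec_at subSn //= eqseq_cons; case: eqP => [Ex|Nx] /=.
  move: H; rewrite Ex subnn /= => /(IH' t' p erefl).
  by rewrite /dec_at; case: ifP => _ Hv /=; rewrite leqnn subnn.
have xu : x <= size u by rewrite -ltnS ltn_neqAle (andP xs).2 andbT; apply/eqP.
by rewrite xs; move: H; rewrite subSn.
Qed.

End Positions.

Section Histories.
Variables (n : nat) (Q G A : finType).
Variable delta : Q -> G -> transition n Q G A.

Lemma push_hist_dec (i : 'I_n) (T p : seq nat) :
  (if take (n - i) p == take (n - i) T
   then set_nth 0 p (n - i.+1) (nth 0 p (n - i.+1)).-1 else p) =
  dec_at (n - i.+1) T p.
Proof. by rewrite /dec_at subnSK. Qed.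

Lemma take_hist_step (c c' : config n Q G) p q m :
  take m p = take m q ->
  take m (hist_step delta c c' p) = take m (hist_step delta c c' q).
Proof.
rewrite /hist_step; case: (top0 c.2) => [g0|//].
case: (delta c.1 g0) => [//|q0 [//|i g]] E.
by rewrite !push_hist_dec (take_dec_at _ _ E).
Qed.

Lemma is_pos_hist_step (c c' : config n Q G) l p :
  step delta c c' l -> is_pos c'.2 p -> is_pos c.2 (hist_step delta c c' p).
Proof.
rewrite /step /hist_step; case: (top0 c.2) => [g0|//].
case: (delta c.1 g0) => [f|q0 [i|i g]].
- by case=> a [_ ->].
- by case=> _ [_ /is_pos_pop]; apply.
- case=> _ [_ Epush] /(is_pos_push Epush).
  by rewrite push_hist_dec.
Qed.

Lemma hist_step_coord (c c' : config n Q G) l p m :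
  step delta c c' l ->
  nth 0 (hist_step delta c c' p) m = nth 0 p m \/
  take m.+1 (hist_step delta c c' p) = take m.+1 (toppos c.2).
Proof.
rewrite /step /hist_step; case: (top0 c.2) => [g0|//].
case: (delta c.1 g0) => [f|q0 [i|i g]]; try by left.
case=> _ [_ Epush]; rewrite push_hist_dec /dec_at.
have Etop := toppos_push Epush; set j := n - i.+1 in Etop *.
case: ifP => [/eqP Ep|_]; last by left.
have [->|mj] := eqVneq m j; last by left; rewrite nth_set_nth /= (negbTE mj).
right; have jn : j < size (toppos c.2).
  by rewrite size_toppos ltn_subrL (leq_ltn_trans (leq0n i) (ltn_ord i)).
rewrite take_set_nth_lt // Ep -(nth_take 0 (ltnSn j) p) Ep nth_take //.
rewrite -take_set_nth_lt // Etop set_set_nth eqxx nth_set_nth /= eqxx.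
by rewrite set_nth_nth.
Qed.

Variable R : nat -> config n Q G.

Lemma hist_cat i d1 d2 p :
  hist delta R i (d1 + d2) p = hist delta R i d1 (hist delta R (i + d1) d2 p).
Proof.
elim: d2 p => [|d IH] p; first by rewrite addn0.
by rewrite addnS /= IH !addnS !addnA.
Qed.

Lemma hist_shift i d e p :
  hist delta (fun t => R (i + t)) d e p = hist delta R (i + d) e p.
Proof. by elim: e p => [//|e IH] p /=; rewrite IH !addnA. Qed.

Lemma take_hist i d p q m :
  take m p = take m q ->
  take m (hist delta R i d p) = take m (hist delta R i d q).
Proof. by elim: d p q => [//|d IH] p q E /=; apply/IH/take_hist_step. Qed.

Definition top_hist (i j : nat) : seq nat :=
  hist delta R i (j - i) (toppos (R j).2).

Definition upper (m i j : nat) : Prop :=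
  i <= j /\ take m (top_hist i j) = take m (toppos (R i).2).

Lemma top_hist_refl i : top_hist i i = toppos (R i).2.
Proof. by rewrite /top_hist subnn. Qed.

Lemma upper_refl m i : upper m i i.
Proof. by split; rewrite ?top_hist_refl. Qed.

Lemma top_hist_cat i l j :
  i <= l -> l <= j -> top_hist i j = hist delta R i (l - i) (top_hist l j).
Proof.
move=> il lj; rewrite /top_hist.
have -> : j - i = (l - i) + (j - l) by lia.
by rewrite hist_cat subnKC.
Qed.

Lemma top_hist_step i j :
  i < j -> top_hist i j = hist_step delta (R i) (R i.+1) (top_hist i.+1 j).
Proof.
by move=> ij; rewrite (top_hist_cat (leqnSn i) ij) subSnn /= addn0 addn1.
Qed.

Lemma upper_trans m i l j : upper m i l -> upper m l j -> upper m i j.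
Proof.
move=> [il E1] [lj E2]; split; first exact: leq_trans lj.
by rewrite (top_hist_cat il lj) -E1; apply: take_hist.
Qed.

Lemma upper_noncross m i l j :
  upper m i j -> upper m l j -> i <= l -> upper m i l.
Proof.
move=> [ij E1] [lj E2] il; split => //.
by rewrite -E1 (top_hist_cat il lj); symmetry; apply: take_hist.
Qed.

End Histories.

Lemma ex_argmin (T : Type) (P : T -> Prop) (f : T -> nat) :
  (exists x, P x) -> exists x, P x /\ forall y, P y -> f x <= f y.
Proof.
move=> [x Px].
have [v [[[y [Py Ev]] minv] _]] := dec_inh_nat_subset_has_unique_least_element
  (fun v => exists y, P y /\ f y = v) (fun v => classic _)
  (ex_intro _ (f x) (ex_intro _ x (conj Px erefl))).
by exists y; split=> // z Pz; rewrite Ev; apply/leP/minv; exists z.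
Qed.

Section StarRuns.
Variables (n : nat) (Q G A : finType) (star : A).
Variable delta : Q -> G -> transition n Q G A.
Variable R : nat -> config n Q G.
Hypothesis hR : star_run star delta R.

Lemma is_pos_hist d i p :
  is_pos (R (i + d)).2 p -> is_pos (R i).2 (hist delta R i d p).
Proof.
elim: d p => [|d IH] p; first by rewrite addn0.
move=> V /=; apply: IH; have [_ [l [S _]]] := hR (i + d).
by rewrite addnS in V *; apply: is_pos_hist_step S V.
Qed.

Lemma is_pos_top_hist i j : i <= j -> is_pos (R i).2 (top_hist delta R i j).
Proof.
move=> ij; apply: is_pos_hist; rewrite subnKC //.
by apply: is_pos_top; have [V _] := hR j.
Qed.

Lemma top_hist_coord m u j : u <= j ->
  exists w, [/\ u <= w, w <= j, upper delta R m w j &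
    nth 0 (top_hist delta R u j) m = nth 0 (toppos (R w).2) m].
Proof.
move/subnKC; move: (j - u) => d; elim: d u => [|d IH] u.
  rewrite addn0 => ->; exists j.
  by split=> //; [apply: upper_refl | rewrite top_hist_refl].
rewrite addnS -addSn => /IH [w [uw wj Uw Ew]].
have uj : u < j := leq_trans uw wj.
have [_ [l [S _]]] := hR u.
have [E|E] := hist_step_coord (top_hist delta R u.+1 j) m S;
  rewrite -top_hist_step // in E.
  by exists w; split=> //; [apply: ltnW | rewrite E].
exists u; split=> //; first exact: ltnW.
  by split; [apply: ltnW | rewrite -(take_takel _ (leqnSn m)) E take_takel].
by rewrite -(nth_take 0 (ltnSn m)) E nth_take.
Qed.

Lemma upper_succ_at_record m t j : m < n -> upper delta R m t j ->
  (forall w, t <= w -> w <= j -> upper delta R m w j ->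
     nth 0 (toppos (R t).2) m <= nth 0 (toppos (R w).2) m) ->
  upper delta R m.+1 t j.
Proof.
move=> mn [tj Et] Hmin.
have [w [tw wj Uw Ew]] := top_hist_coord m tj.
have V := is_pos_top_hist tj.
have Eq : nth 0 (top_hist delta R t j) m = nth 0 (toppos (R t).2) m.
  by apply/eqP; rewrite eqn_leq (is_pos_le_top V Et) Ew Hmin.
split=> //; rewrite (take_nth 0 (s := top_hist _ _ _ _)) ?(size_is_pos V) //.
by rewrite (take_nth 0 (s := toppos _)) ?size_toppos // Et Eq.
Qed.

Definition upper_set (m : nat) (I : nat -> Prop) : Prop :=
  forall i j, I i -> I j -> i <= j -> upper delta R m i j.

Lemma upper_set_down m (I : nat -> Prop) :
  upper_set m I -> upper_set m (fun w => exists b, I b /\ upper delta R m w b).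
Proof.
move=> UI w w' [b [Ib Ub]] [b' [Ib' Ub']] ww'.
have [bb'|b'b] := leqP b b'.
  exact: upper_noncross (upper_trans Ub (UI _ _ Ib Ib' bb')) Ub' ww'.
exact: upper_noncross Ub (upper_trans Ub' (UI _ _ Ib' Ib (ltnW b'b))) ww'.
Qed.

Lemma upper_set_succ m (I : nat -> Prop) : m < n ->
  infinite_set I -> upper_set m I ->
  exists J, infinite_set J /\ upper_set m.+1 J.
Proof.
move=> mn infI UI.
pose D w := exists b, I b /\ upper delta R m w b.
pose h t := nth 0 (toppos (R t).2) m.
exists (fun t => D t /\ forall w, D w -> t <= w -> h t <= h w); split.
  move=> N; have [b [Nb Ib]] := infI N.
  have [t [[Nt Dt] Ht]] := @ex_argmin _ (fun t => N <= t /\ D t) h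
    (ex_intro _ b (conj Nb (ex_intro _ b (conj Ib (upper_refl _ _ _ _))))).
  exists t; split=> //; split=> // w Dw tw.
  by apply: Ht; split=> //; apply: leq_trans tw.
move=> t t' [Dt Ht] [[b [Ib Ub]] _] tt'.
have Dt' : D t' by exists b.
apply: (upper_succ_at_record mn (upper_set_down UI Dt Dt' tt')) => w tw _ Uw.
by apply: Ht tw; exists b; split=> //; apply: upper_trans Uw Ub.
Qed.

Lemma upper_set_full : exists I, infinite_set I /\ upper_set n I.
Proof.
suff: forall m, m <= n -> exists I, infinite_set I /\ upper_set m I by apply.
elim=> [|m IH] mn.
  exists (fun _ => True); split; first by move=> N; exists N.
  by move=> i j _ _ ij; split; rewrite ?take0.
have [I [infI UI]] := IH (ltnW mn).
exact: upper_set_succ mn infI UI.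
Qed.

(* n-upper is the paper's 0-upper, since positions have n coordinates. *)
Lemma upper_full_upper0 i j : upper delta R n i j -> upper0 delta R i j.
Proof.
move=> [ij E]; move: E; rewrite /upper0 -/(top_hist delta R i j).
by rewrite !take_oversize ?size_toppos ?(size_is_pos (is_pos_top_hist ij)).
Qed.

(* Every element of an infinite pairwise n-upper set is a milestone: the
   suffix of R from it, with the set shifted, witnesses the definition. *)
Lemma milestone_of_upper_set (I : nat -> Prop) i :
  infinite_set I -> upper_set n I -> I i -> milestone star delta (R i).
Proof.
move=> infI UI Ii.
exists (fun t => R (i + t)); split; first by rewrite addn0.
split; first by move=> t /=; have := hR (i + t); rewrite addnS.
exists (fun d => I (i + d)); split; last split.
- move=> M; have [j [Mj Ij]] := infI (i + M).
  have ij : i <= j := leq_trans (leq_addr M i) Mj.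
  by exists (j - i); rewrite (leq_subRL _ ij) subnKC.
- by rewrite addn0.
move=> d d' Id Id' dd'; rewrite /upper0 hist_shift /=.
have := upper_full_upper0 (UI _ _ Id Id' (leq_add (leqnn i) dd')).
by rewrite /upper0 subnDl.
Qed.

End StarRuns.

Theorem mainTheorem15
  (n : nat) (hn : 1 <= n) (Q G A : finType) (star : A)
  (delta : Q -> G -> transition n Q G A)
  (hinj : forall q g f, delta q g = Read n G f -> injective f)
  (R : nat -> config n Q G)
  (hR : star_run star delta R) :
  forall m, exists i, m <= i /\ milestone star delta (R i).
Proof.
have [I [infI UI]] := upper_set_full hR.
move=> m; have [i [mi Ii]] := infI m.
by exists i; split=> //; exact: (milestone_of_upper_set hR infI UI Ii).
Qed.
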